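(* Let $d\ge1$, $m\in\mathbb{N}$ ($m\ge1$), and let $A_0,A_1\in\mathbb{R}^{d\times d}$ be constant matrices. Let $\Psi:\mathbb{Z}_{-m}^{0}\to\mathbb{R}^{d\times d}$ satisfy $A_1\Psi(u)=\Psi(u)A_1$ for all $u\in\mathbb{Z}_{-m}^{0}$, and let $Z$ be the discrete function defined in the context. Then \[ X(u)=Z(u)\Psi(-m)+\sum_{r=-m+1}^{0}Z(u-m-r)\,\Delta\Psi(r-1),\qquad u\in\mathbb{Z}_{-m}^{\infty}, \] is the unique solution of \[ \Delta X(u)=A_0X(u-m)+X(u-m)A_1,\ \ u\in\mathbb{Z}_0^{\infty},\qquad X(u)=\Psi(u),\ \ u\in\mathbb{Z}_{-m}^{0}. \]
   Context: $\Theta$ and $I$ denote the $d\times d$ zero and identity matrices; $\mathbb{Z}_a^b=\{a,a+1,\dots,b\}$ (with $\mathbb{Z}_a^\infty=\{a,a+1,\dots\}$ and $\mathbb{Z}_{-\infty}^b=\{\dots,b-1,b\}$); $\Delta X(u)=X(u+1)-X(u)$ (so $\Delta\Psi(r-1)=\Psi(r)-\Psi(r-1)$). For integers $a$ and $r\ge0$, $\binom{a}{r}=a(a-1)\cdots(a-r+1)/r!$. Define matrices $Q_{r+1}(rm)$, $r=0,1,2,\dots$, by $Q_1(0)=I$ and $Q_{r+1}(rm)=A_0Q_r((r-1)m)+Q_r((r-1)m)A_1$ for $r\ge1$. Define $Z(u)=\Theta$ for $u\in\mathbb{Z}_{-\infty}^{-m-1}$, $Z(u)=I$ for $u\in\mathbb{Z}_{-m}^{0}$,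 and for each integer $n\ge1$ and $u\in\mathbb{Z}_{(n-1)(m+1)+1}^{n(m+1)}$, \[ Z(u)=\sum_{r=0}^{n}\binom{u-(r-1)m}{r}Q_{r+1}(rm). \] *)

From mathcomp Require Import all_boot all_order all_algebra.
From mathcomp Require Import reals.
Set Implicit Arguments. Unset Strict Implicit. Unset Printing Implicit Defensive.
Import Order.TTheory GRing.Theory Num.Theory.
Local Open Scope ring_scope.

Definition binomZ (R : realType) (a : int) (r : nat) : R :=
  (\prod_(i < r) (a - (i : nat)%:Z)%:~R) / (r`!)%:R.

(* Qm A0 A1 r  =  Q_{r+1}(r m) of the paper:
   Q_1(0) = I,  Q_{r+1}(rm) = A0 Q_r((r-1)m) + Q_r((r-1)m) A1. *)
Fixpoint Qm (R : realType) (d : nat) (A0 A1 : 'M[R]_d) (r : nat) : 'M[R]_d :=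
  match r with
  | 0 => 1%:M
  | r'.+1 => A0 *m Qm A0 A1 r' + Qm A0 A1 r' *m A1
  end.

(* The discrete function Z of the paper.  For u >= 1, n is the unique n >= 1
   with (n-1)(m+1)+1 <= u <= n(m+1), i.e. n = (u-1) div (m+1) + 1. *)
Definition Zfun (R : realType) (d m : nat) (A0 A1 : 'M[R]_d) (u : int) : 'M[R]_d :=
  if u < - (m%:Z) then 0
  else if u <= 0 then 1%:M
  else let n := (`|((u - 1) %/ (m.+1)%:Z)%Z|%N).+1 in
       \sum_(r < n.+1)
         binomZ R (u - ((r : nat)%:Z - 1) * m%:Z) r *: Qm A0 A1 r.

Definition Xsol (R : realType) (d m : nat) (A0 A1 : 'M[R]_d)
  (Psi : int -> 'M[R]_d) (u : int) : 'M[R]_d :=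
  Zfun m A0 A1 u *m Psi (- (m%:Z))
  + \sum_(k < m)
      let r := (k : nat)%:Z - m%:Z + 1 in
      Zfun m A0 A1 (u - m%:Z - r) *m (Psi r - Psi (r - 1)).

Definition solves_ivp (R : realType) (d m : nat) (A0 A1 : 'M[R]_d)
  (Psi X : int -> 'M[R]_d) : Prop :=
  (forall u : int, 0 <= u ->
     X (u + 1) - X u = A0 *m X (u - m%:Z) + X (u - m%:Z) *m A1) /\
  (forall u : int, - (m%:Z) <= u <= 0 -> X u = Psi u).

From mathcomp Require Import all_boot all_order all_algebra.
From mathcomp Require Import reals.
From mathcomp Require Import zify ring.
Set Implicit Arguments. Unset Strict Implicit. Unset Printing Implicit Defensive.
Import Order.TTheory GRing.Theory Num.Theory.
Local Open Scope ring_scope.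

(* Z is the fundamental solution of the recurrence
   Delta X(u) = A0 X(u-m) + X(u-m) A1.  On [-m, oo) it is the single finite sum
   sum_r binom(u + m - r m, r) Q_{r+1}(rm), binomials with negative top entry
   being set to 0, and Pascal's rule together with the recursion defining the
   Q's turns Delta Z(u) into A0 Z(u-m) + Z(u-m) A1.  The recurrence is linear,
   invariant under shifts and preserved by right multiplication with matrices
   commuting with A1, so X, a combination of shifts of Z with the coefficients
   Psi(-m) and Delta Psi(r-1), solves it; on [-m, 0] that combination telescopes
   to Psi(u).  Uniqueness holds because the recurrence determines X(u+1) from
   X(u) and X(u-m). *)

Section DelayRecurrence.
Variables (R : pzRingType) (d m : nat) (A0 A1 : 'M[R]_d).

Definition delay_rec_from (u0 : int) (X : int -> 'M[R]_d) : Prop :=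
  forall u, u0 <= u ->
    X (u + 1) - X u = A0 *m X (u - m%:Z) + X (u - m%:Z) *m A1.

Lemma delay_rec_le u0 u1 X :
  u0 <= u1 -> delay_rec_from u0 X -> delay_rec_from u1 X.
Proof. by move=> le01 hX u hu; apply: hX; apply: le_trans hu. Qed.

Lemma delay_rec_eq u0 X Y : X =1 Y -> delay_rec_from u0 X -> delay_rec_from u0 Y.
Proof. by move=> eXY hX u hu; rewrite -!eXY hX. Qed.

Lemma delay_rec_shift u0 s X :
  delay_rec_from u0 X -> delay_rec_from (u0 + s) (fun u => X (u - s)).
Proof.
move=> hX u hu; rewrite addrAC [u - m%:Z - s]addrAC.
by apply: hX; rewrite lerBrDr.
Qed.

Lemma delay_rec_mulmxr u0 P X : A1 *m P = P *m A1 ->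
  delay_rec_from u0 X -> delay_rec_from u0 (fun u => X u *m P).
Proof.
move=> hP hX u hu.
by rewrite -mulmxBl hX // mulmxDl -!mulmxA hP.
Qed.

Lemma delay_rec_add u0 X Y : delay_rec_from u0 X -> delay_rec_from u0 Y ->
  delay_rec_from u0 (fun u => X u + Y u).
Proof.
move=> hX hY u hu.
by rewrite opprD addrACA hX // hY // mulmxDr mulmxDl addrACA.
Qed.

Lemma delay_rec_sum u0 n (F : 'I_n -> int -> 'M[R]_d) :
  (forall k, delay_rec_from u0 (F k)) ->
  delay_rec_from u0 (fun u => \sum_(k < n) F k u).
Proof.
move=> hF u hu; rewrite -sumrB mulmx_sumr mulmx_suml -big_split.
by apply: eq_bigr => k _; apply: hF.
Qed.

Lemma delay_rec_unique X Y :
  delay_rec_from 0 X -> delay_rec_from 0 Y ->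
  (forall u, - (m%:Z) <= u <= 0 -> X u = Y u) ->
  forall u, - (m%:Z) <= u -> X u = Y u.
Proof.
move=> hX hY hXY.
suff XYk (k : nat) : X (k%:Z - m%:Z) = Y (k%:Z - m%:Z).
  by move=> u hu; rewrite (_ : u = (absz (u + m%:Z))%:Z - m%:Z) ?XYk //; lia.
elim/ltn_ind: k => k IH.
have [le_km | lt_mk] := leqP k m; first by apply: hXY; lia.
pose w := k.-1%:Z - m%:Z.
rewrite (_ : k%:Z - m%:Z = w + 1); last by rewrite /w; lia.
apply: (@subIr _ (X w)).
rewrite hX; last by rewrite /w; lia.
rewrite {2}/w IH; last by lia.
rewrite hY; last by rewrite /w; lia.
by rewrite (_ : w - m%:Z = (k.-1 - m)%N%:Z - m%:Z) ?IH //; rewrite /w; lia.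
Qed.

End DelayRecurrence.

Section GeneralizedBinomial.
Variable R : realType.

Lemma binomZ0 (a : int) : binomZ R a 0 = 1.
Proof. by rewrite /binomZ big_ord0 fact0 divr1. Qed.

Lemma binomZ_small (a : int) (r : nat) : 0 <= a -> a < r%:Z -> binomZ R a r = 0.
Proof.
move=> a_ge0 lt_ar.
have lt_ar' : (`|a| < r)%N by lia.
rewrite /binomZ (bigD1 (Ordinal lt_ar')) //=.
by rewrite (_ : a - `|a|%N%:Z = 0) ?mul0r //; lia.
Qed.

Lemma binomZS (a : int) (r : nat) :
  binomZ R (a + 1) r.+1 = binomZ R a r.+1 + binomZ R a r.
Proof.
rewrite /binomZ big_ord_recl big_ord_recr /=.
under eq_bigr => i _ do
  have -> : a + 1 - (bump 0 i)%:Z = a - (i : nat)%:Z by rewrite /bump /=; lia.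
set P := \prod_(i < r) _.
have fact_neq0 : (r`!)%:R != 0 :> R by rewrite pnatr_eq0 -lt0n fact_gt0.
have r1_neq0 : r.+1%:R != 0 :> R by rewrite pnatr_eq0.
rewrite factS natrM subr0 !intrD intrN /= -natr1 in r1_neq0 *.
by field; rewrite fact_neq0 r1_neq0.
Qed.

(* Cutting binomZ off at negative top entries keeps Pascal's rule valid at
   a = -1 (because binomZ 0 r.+1 = 0) and kills every term with a < r. *)
Definition pbinom (a : int) (r : nat) : R := if 0 <= a then binomZ R a r else 0.

Lemma pbinom0 a : 0 <= a -> pbinom a 0 = 1.
Proof. by move=> a_ge0; rewrite /pbinom a_ge0 binomZ0. Qed.

Lemma pbinom_small a r : a < r%:Z -> pbinom a r = 0.
Proof. by rewrite /pbinom; case: ifP => // a_ge0 lt_ar; rewrite binomZ_small. Qed.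

Lemma pbinomS a r : pbinom (a + 1) r.+1 = pbinom a r.+1 + pbinom a r.
Proof.
rewrite /pbinom; have [a_ge0 | a_lt0] := boolP (0 <= a).
  by rewrite ifT ?binomZS //; lia.
have [-> | a_neqN1] := eqVneq a (-1).
  by rewrite /= binomZ_small //= addr0.
by rewrite ifF ?addr0 //; lia.
Qed.

End GeneralizedBinomial.

Lemma sumr_ord_trunc (V : nmodType) n N (F : nat -> V) : (n <= N)%N ->
  (forall i, (n <= i < N)%N -> F i = 0) -> \sum_(i < N) F i = \sum_(i < n) F i.
Proof.
move=> le_nN F0; rewrite -!(big_mkord xpredT) (big_cat_nat (leq0n n) le_nN) /=.
by rewrite [X in _ + X]big1_seq ?addr0 // => i; rewrite mem_index_iota => /F0.
Qed.

Section FundamentalSolution.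
Variables (R : realType) (d m : nat) (A0 A1 : 'M[R]_d).

Notation Z := (Zfun m A0 A1).

Definition Zsum (N : nat) (u : int) : 'M[R]_d :=
  \sum_(r < N) pbinom R (u + m%:Z - (r : nat)%:Z * m%:Z) r *: Qm A0 A1 r.

Lemma Zsum_rec N u : - (m%:Z) <= u ->
  Zsum N.+1 (u + 1) - Zsum N.+1 u =
  A0 *m Zsum N (u - m%:Z) + Zsum N (u - m%:Z) *m A1.
Proof.
move=> hu.
rewrite /Zsum -sumrB big_ord_recl /= !mul0r !subr0 !pbinom0; try lia.
rewrite subrr add0r mulmx_sumr mulmx_suml -big_split /=.
apply: eq_bigr => i _; rewrite -scalerBl /bump /=.
rewrite (_ : u + 1 + m%:Z - (1 + i)%:Z * m%:Z = u + m%:Z - (1 + i)%:Z * m%:Z + 1);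
  last by lia.
rewrite pbinomS [pbinom _ _ i.+1 + _]addrC addrK.
rewrite (_ : u - m%:Z + m%:Z - (i : nat)%:Z * m%:Z = u + m%:Z - (1 + i)%:Z * m%:Z);
  last by lia.
by rewrite -scalemxAr -scalemxAl -scalerDr.
Qed.

Lemma Zfun_small u : u < - (m%:Z) -> Z u = 0.
Proof. by rewrite /Zfun => ->. Qed.

Lemma Zfun_init u : - (m%:Z) <= u <= 0 -> Z u = 1%:M.
Proof. by case/andP=> hmu hu0; rewrite /Zfun ltNge hmu hu0. Qed.

Lemma Zsum_trunc n N u : (n <= N)%N -> u + m%:Z < (n * m.+1)%N%:Z ->
  Zsum N u = Zsum n u.
Proof.
move=> le_nN hu; rewrite /Zsum.
pose F r := pbinom R (u + m%:Z - r%:Z * m%:Z) r *: Qm A0 A1 r.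
apply: (sumr_ord_trunc (F := F)) => // r /andP[le_nr _].
by rewrite /F pbinom_small ?scale0r //; nia.
Qed.

Lemma Zfun_Zsum N u : u + m%:Z < N%:Z -> Z u = Zsum N u.
Proof.
move=> hN; have [u_lt | u_ge] := ltrP u (- (m%:Z)).
  by rewrite Zfun_small // (@Zsum_trunc 0) /Zsum ?big_ord0 //; lia.
have [u_le0 | u_gt0] := lerP u 0.
  rewrite Zfun_init ?(@Zsum_trunc 1) /Zsum ?big_ord1 /= ?mul0r ?subr0;
  by rewrite ?pbinom0 ?scale1r //; lia.
set q := ((u - 1) %/ (m.+1)%:Z)%Z.
have q_ge0 : 0 <= q by rewrite divz_ge0 //; lia.
have q_le : q * (m.+1)%:Z <= u - 1 by apply: lez_floor.
have q_gt : u - 1 < (q + 1) * (m.+1)%:Z by apply: ltz_ceil.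
rewrite (@Zsum_trunc `|q|.+2); try nia.
rewrite /Zfun ifF ?ifF -/q; try lia.
apply: eq_bigr => r _; have lt_rq := ltn_ord r.
by rewrite /pbinom ifT; [congr (binomZ _ _ _ *: _); lia | nia].
Qed.

Lemma Zfun_rec : delay_rec_from m A0 A1 (- (m%:Z)) Z.
Proof.
move=> u hu; pose N := (`|u|%N + m + 2)%N.
rewrite (@Zfun_Zsum N.+1 (u + 1)) ?(@Zfun_Zsum N.+1 u) ?(@Zfun_Zsum N (u - m%:Z))
  ?Zsum_rec //; rewrite /N; lia.
Qed.

End FundamentalSolution.

Section Solution.
Variables (R : realType) (d m : nat) (A0 A1 : 'M[R]_d) (Psi : int -> 'M[R]_d).
Hypothesis hcomm : forall u, - (m%:Z) <= u <= 0 -> A1 *m Psi u = Psi u *m A1.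

Lemma Xsol_rec : delay_rec_from m A0 A1 0 (Xsol m A0 A1 Psi).
Proof.
apply: delay_rec_add.
  apply: delay_rec_mulmxr; first by apply: hcomm; lia.
  by apply: delay_rec_le _ (Zfun_rec A0 A1); lia.
apply: delay_rec_sum => k /=; have lt_km := ltn_ord k.
set r := (k : nat)%:Z - m%:Z + 1.
apply: delay_rec_mulmxr; first by rewrite mulmxBl mulmxBr !hcomm //; lia.
apply: (delay_rec_eq (X := fun u => Zfun m A0 A1 (u - (m%:Z + r)))).
  by move=> u; rewrite opprD addrA.
by apply: delay_rec_le _ (delay_rec_shift (Zfun_rec A0 A1)); lia.
Qed.

Lemma Xsol_init u : - (m%:Z) <= u <= 0 -> Xsol m A0 A1 Psi u = Psi u.
Proof.
move=> /andP[hmu hu0]; rewrite /Xsol Zfun_init ?hmu // mul1mx.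
pose j := absz (u + m%:Z); pose f i := Psi (i%:Z - m%:Z).
have le_jm : (j <= m)%N by lia.
(* Z (u - k - 1) is 1 for k < j and 0 beyond, so the sum telescopes. *)
rewrite (eq_bigr (fun k : 'I_m => if (k < j)%N then f k.+1 - f k else 0)); last first.
  move=> k _ /=; case: ifP => lt_kj.
    by rewrite Zfun_init ?mul1mx /f; [congr (Psi _ - Psi _) | apply/andP; split]; lia.
  by rewrite Zfun_small ?mul0mx //; lia.
rewrite -big_mkcond -(big_ord_widen _ (fun k => f k.+1 - f k) le_jm) /=.
rewrite -(big_mkord xpredT (fun k => f k.+1 - f k)) telescope_sumr // /f.
by rewrite sub0r addrC subrK; congr (Psi _); lia.
Qed.

End Solution.

Theorem theorem5 (R : realType) (d m : nat) (hd : (0 < d)%N) (hm : (0 < m)%N)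
  (A0 A1 : 'M[R]_d) (Psi : int -> 'M[R]_d)
  (hcomm : forall u : int, - (m%:Z) <= u <= 0 -> A1 *m Psi u = Psi u *m A1) :
  solves_ivp m A0 A1 Psi (Xsol m A0 A1 Psi) /\
  (forall Y : int -> 'M[R]_d, solves_ivp m A0 A1 Psi Y ->
     forall u : int, - (m%:Z) <= u -> Y u = Xsol m A0 A1 Psi u).
Proof.
split; first by split; [exact: Xsol_rec | exact: Xsol_init].
move=> Y [Y_rec Y_init].
apply: (delay_rec_unique Y_rec (Xsol_rec A0 hcomm)) => u hu.
by rewrite Y_init // Xsol_init.
Qed.
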